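(* Let $\mathbb{K}$ be an algebraically closed field of characteristic zero and let $Y=V\times\mathbb{A}^1$ for an irreducible affine variety $V$. Then $Y$ is of type A, i.e. $\mathrm{HD}^*(Y\times\mathbb{A}^1)=\mathbb{K}[Y\times\mathbb{A}^1]$.
   Context: A derivation is locally nilpotent (LND) if every element is killed by some power of it. A slice of an LND $\partial$ is an element $s$ with $\partial(s)=1$. For an affine variety $X$, $\mathrm{HD}^*(X)$ is the $\mathbb{K}$-subalgebra of $\mathbb{K}[X]$ generated by the kernels of all LNDs of $\mathbb{K}[X]$ that have a slice. *)

From HB Require Import structures.
From mathcomp Require Import all_boot all_order all_algebra.
Set Implicit Arguments. Unset Strict Implicit. Unset Printing Implicit Defensive.
Import GRing.Theory.
Local Open Scope ring_scope.

(* Setting: a commutative ring R viewed as a K-algebra via the structure map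
   [iK : K -> R] (a ring morphism in all our uses). *)

Inductive gen_alg (K : fieldType) (R : comNzRingType) (iK : K -> R)
    (S : R -> Prop) : R -> Prop :=
  | gen_alg_in x : S x -> gen_alg iK S x
  | gen_alg_scal k : gen_alg iK S (iK k)
  | gen_alg_add x y : gen_alg iK S x -> gen_alg iK S y -> gen_alg iK S (x + y)
  | gen_alg_mul x y : gen_alg iK S x -> gen_alg iK S y -> gen_alg iK S (x * y).

Definition is_Kderivation (K : fieldType) (R : comNzRingType) (iK : K -> R)
    (D : R -> R) : Prop :=
  [/\ forall x y, D (x + y) = D x + D y,
      forall x y, D (x * y) = D x * y + x * D y &
      forall k, D (iK k) = 0].

Definition is_LND (K : fieldType) (R : comNzRingType) (iK : K -> R)
    (D : R -> R) : Prop :=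
  is_Kderivation iK D /\ forall x, exists n : nat, iter n D x = 0.

Definition has_slice (R : comNzRingType) (D : R -> R) : Prop :=
  exists s, D s = 1.

Definition HDstar (K : fieldType) (R : comNzRingType) (iK : K -> R) : R -> Prop :=
  gen_alg iK (fun x => exists D, [/\ is_LND iK D, has_slice D & D x = 0]).

Definition fin_gen_alg (K : fieldType) (A : comAlgType K) : Prop :=
  exists s : seq A, forall a : A, gen_alg (fun k : K => k%:A : A) (fun x => x \in s) a.

Definition is_domain (A : comNzRingType) : Prop :=
  forall a b : A, a * b = 0 -> a = 0 \/ b = 0.

(* Structure map K -> A[x][y] = K[V x A^1 x A^1]. *)
Definition iK2 (K : fieldType) (A : comAlgType K) (k : K) : {poly {poly A}} :=
  ((k%:A : A)%:P)%:P.

From mathcomp Require Import all_boot all_algebra.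
Local Open Scope ring_scope.
Import GRing.Theory.
Set Implicit Arguments. Unset Strict Implicit. Unset Printing Implicit Defensive.

(* K[Y x A^1] = A[x][y].  The derivation d/dy has slice y and kills A[x], and
   the coefficientwise extension of d/dx has slice x and kills y; since A[x]
   and y generate A[x][y], HD^* is everything.  The same argument gives
   HD^*(R[y]) = R[y] whenever R carries an LND with a slice. *)

Section GeneratedAlgebra.
Variables (K : fieldType) (R : comNzRingType) (iK : K -> {poly R}).
Variable S : {poly R} -> Prop.

Lemma gen_alg_poly :
  (forall c, gen_alg iK S c%:P) -> gen_alg iK S 'X ->
  forall p, gen_alg iK S p.
Proof.
move=> genC genX p; rewrite -[p]coefK poly_def.
apply: big_ind => [|x y|i _]; first by rewrite -polyC0.
  exact: gen_alg_add.
rewrite -mul_polyC; apply: gen_alg_mul => //.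
elim: (nat_of_ord i) => [|n IHn]; first by rewrite expr0 -polyC1.
by rewrite exprS; apply: gen_alg_mul.
Qed.

End GeneratedAlgebra.

Section Derivations.
Variables (K : fieldType) (R : comNzRingType) (iK : K -> R) (D : R -> R).
Hypothesis derD : is_Kderivation iK D.

Lemma Kderivation0 : D 0 = 0.
Proof. by case: derD => DD _ _; apply/(@addrI _ (D 0)); rewrite -DD !addr0. Qed.

Lemma Kderivation1 : D 1 = 0.
Proof.
case: derD => _ DM _; apply/(@addrI _ (D 1)).
by rewrite addr0 -{3}[1]mul1r DM mulr1 mul1r.
Qed.

Lemma iter_Kderivation_eq0 n m x :
  (n <= m)%N -> iter n D x = 0 -> iter m D x = 0.
Proof.
move=> le_nm Dnx; rewrite -(subnK le_nm) iterD Dnx.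
by elim: (m - n)%N => //= k ->; apply: Kderivation0.
Qed.

Lemma iter_Kderivation_seq_eq0 (s : seq R) :
  (forall x, exists n, iter n D x = 0) ->
  exists n, forall x, x \in s -> iter n D x = 0.
Proof.
move=> nilD; elim: s => [|y s [n IHs]]; first by exists 0%N.
have [m Dmy] := nilD y; exists (maxn m n) => x; rewrite inE.
case/predU1P=> [->|/IHs].
  exact: iter_Kderivation_eq0 (leq_maxl m n) Dmy.
exact: iter_Kderivation_eq0 (leq_maxr m n).
Qed.

End Derivations.

Section CoefficientwiseDerivation.
Variables (K : fieldType) (R : comNzRingType) (iK : K -> R) (D : R -> R).
Hypothesis derD : is_Kderivation iK D.

Local Notation DP := (map_poly D).

Lemma coef_map_Kderivation p i : (DP p)`_i = D p`_i.
Proof. by rewrite coef_map_id0 // (Kderivation0 derD). Qed.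

Lemma coef_iter_map_Kderivation n p i : (iter n DP p)`_i = iter n D p`_i.
Proof. by elim: n => //= n IHn; rewrite coef_map_Kderivation IHn. Qed.

Lemma map_Kderivation_polyC c : DP c%:P = (D c)%:P.
Proof.
apply/polyP=> i; rewrite coef_map_Kderivation !coefC.
by case: (i == 0)%N; rewrite ?(Kderivation0 derD).
Qed.

Lemma map_Kderivation_X : DP 'X = 0.
Proof.
apply/polyP=> i; rewrite coef_map_Kderivation coefX coef0.
by case: (i == 1)%N; rewrite ?(Kderivation1 derD) ?(Kderivation0 derD).
Qed.

Lemma map_Kderivation : is_Kderivation (fun k => (iK k)%:P) DP.
Proof.
case: derD => DD DM DK; split=> [p q|p q|k].
- by apply/polyP=> i; rewrite coefD !coef_map_Kderivation coefD DD.
- apply/polyP=> i; rewrite coefD coef_map_Kderivation !coefM.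
  rewrite (big_morph D DD (Kderivation0 derD)) -big_split /=.
  by apply: eq_bigr => j _; rewrite DM !coef_map_Kderivation.
- by rewrite map_Kderivation_polyC DK.
Qed.

Lemma map_LND :
  (forall x, exists n, iter n D x = 0) -> is_LND (fun k => (iK k)%:P) DP.
Proof.
move=> nilD; split; first exact: map_Kderivation.
move=> p; have [n Dn0] := iter_Kderivation_seq_eq0 derD p nilD.
exists n; apply/polyP=> i; rewrite coef_iter_map_Kderivation coef0.
have [lt_ip|le_pi] := ltnP i (size p); first by apply/Dn0/mem_nth.
by rewrite nth_default //; apply: (iter_Kderivation_eq0 derD (leq0n n)).
Qed.

Lemma map_Kderivation_slice : has_slice D -> has_slice DP.
Proof. by case=> s Ds; exists s%:P; rewrite map_Kderivation_polyC Ds. Qed.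

End CoefficientwiseDerivation.

Lemma deriv_LND (K : fieldType) (R : comNzRingType) (iK : K -> {poly R}) :
  (forall k, (iK k)^`() = 0) -> is_LND iK (@deriv R).
Proof.
move=> derivK; split; first by split=> [p q|p q|k]; rewrite ?derivD ?derivM.
by move=> p; exists (size p); apply: derivn_poly0.
Qed.

Lemma HDstar_poly (K : fieldType) (R : comNzRingType) (iK : K -> R)
    (D : R -> R) :
  is_LND iK D -> has_slice D -> forall p : {poly R},
  HDstar (fun k => (iK k)%:P) p.
Proof.
move=> [derD nilD] sliceD; apply: gen_alg_poly => [c|].
  apply: gen_alg_in; exists (@deriv R); split; last exact: derivC.
    by apply: deriv_LND => k; apply: derivC.
  by exists 'X; apply: derivX.
apply: gen_alg_in; exists (map_poly D); split.
- exact: map_LND derD nilD.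
- exact: map_Kderivation_slice derD sliceD.
- exact: map_Kderivation_X derD.
Qed.

Theorem corollary4 (K : closedFieldType) (hchar : [pchar K] =i pred0)
    (A : comAlgType K) (hfg : fin_gen_alg A) (hdom : is_domain A) :
  forall f : {poly {poly A}}, HDstar (@iK2 K A) f.
Proof.
have derivA_LND : is_LND (fun k : K => (k%:A : A)%:P) (@deriv A).
  by apply: deriv_LND => k; apply: derivC.
have derivA_slice : has_slice (@deriv A) by exists 'X; apply: derivX.
exact: HDstar_poly derivA_LND derivA_slice.
Qed.
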